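(* Let $\Gamma$ be a connected $(Y,Y')$-bipartite distance-regularized graph. Let $D$ denote the (common) eccentricity of the vertices of $Y$, and let $c'_2=c_2(w)$ for $w\in Y'$. The following are equivalent: (i) $\Gamma$ is $2$-$Y$-homogeneous with $D=4$ and $c'_2=1$; (ii) $\Gamma$ is isomorphic to the subdivision graph of a complete bipartite graph $K_{n,n}=(X,\mathcal{R})$ with $n\ge 2$, via an isomorphism mapping $Y$ onto $X$.
   Context: Graphs are finite, simple, undirected. For vertices $u,w$ of a connected graph, $\partial(u,w)$ is the distance, $\Gamma_i(u)$ the set of vertices at distance $i$ from $u$, $\Gamma(u)=\Gamma_1(u)$, $\varepsilon(u)$ the eccentricity of $u$. For $w\in\Gamma_i(u)$ put $a_i(u,w)=|\Gamma_i(u)\cap\Gamma(w)|$, $b_i(u,w)=|\Gamma_{i+1}(u)\cap\Gamma(w)|$, $c_i(u,w)=|\Gamma_{i-1}(u)\cap\Gamma(w)|$. A vertex $u$ is distance-regularized if for each $0\le i\le\varepsilon(u)$ these numbers do not depend on $w\in\Gamma_i(u)$ (they are then written $c_i(u)$ etc.); a connected graph is distance-regularized if all vertices are. $(Y,Y')$-bipartite means the vertex set is the disjoint union of $Y,Y'$ with every edge joining $Y$ to $Y'$; in a bipartite distance-regularized graph all vertices of $Y$ have the same eccentricity and intersection numbers, and likewise for $Y'$. For a $(Y,Y')$-bipartite graph in which every vertex of $Y$ has eccentricity $D\ge3$: it is $2$-$Y$-homogeneous if for each $i$ with $1\le i\le D-1$ the number $|\Gamma(x)\cap\Gamma(y)\cap\Gamma_{i-1}(z)|$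 is the same for all $x\in Y$, $y\in\Gamma_2(x)$, $z\in\Gamma_i(x)\cap\Gamma_i(y)$. The subdivision graph of a graph is obtained by replacing each edge $uv$ by a path $u,w_{uv},v$ through a new vertex $w_{uv}$. *)

From mathcomp Require Import all_boot.
Set Implicit Arguments. Unset Strict Implicit. Unset Printing Implicit Defensive.

Section Graphs.
Variable T : finType.
Variable e : rel T.

Definition simple_graph : Prop := symmetric e /\ irreflexive e.

Fixpoint walk (k : nat) (u w : T) : bool :=
  match k with
  | 0 => u == w
  | k'.+1 => [exists v, e u v && walk k' v w]
  end.

Definition connected_graph : Prop := forall u w : T, exists k, walk k u w.

(* distance = least length of a walk (a shortest walk has length < #|T|);
   meaningful for connected graphs *)
Definition dist (u w : T) : nat := find (fun k => walk k u w) (iota 0 #|T|).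

Definition sphere (u : T) (i : nat) : {set T} := [set w | dist u w == i].
Definition nbhd (u : T) : {set T} := [set w | e u w].

Definition ecc (u : T) : nat := \max_(w : T) dist u w.

Definition a_num (u w : T) : nat := #|sphere u (dist u w) :&: nbhd w|.
Definition b_num (u w : T) : nat := #|sphere u (dist u w).+1 :&: nbhd w|.
Definition c_num (u w : T) : nat :=
  if dist u w == 0 then 0 else #|sphere u (dist u w).-1 :&: nbhd w|.

Definition dist_regularized_vertex (u : T) : Prop :=
  forall i, i <= ecc u -> forall w w', w \in sphere u i -> w' \in sphere u i ->
    [/\ a_num u w = a_num u w', b_num u w = b_num u w' & c_num u w = c_num u w'].

Definition dist_regularized : Prop :=
  connected_graph /\ forall u, dist_regularized_vertex u.

(* (Y, Y')-bipartite with Y' = complement of Y *)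
Definition bipartite_on (Y : {set T}) : Prop :=
  forall u v, e u v -> (u \in Y) != (v \in Y).

Definition two_Y_homogeneous (Y : {set T}) (D : nat) : Prop :=
  forall i, 1 <= i <= D - 1 -> exists k, forall x y z,
    x \in Y -> y \in sphere x 2 -> z \in sphere x i -> z \in sphere y i ->
    #|nbhd x :&: nbhd y :&: sphere z i.-1| = k.

End Graphs.

(* Subdivision graph of a graph (V, r): vertices are V plus the edges
   (2-subsets {u,v} with r u v); a vertex v is joined to an edge s iff v \in s. *)
Definition edge_of (V : finType) (r : rel V) (s : {set V}) : bool :=
  [exists u, exists v, r u v && (s == [set u; v])].

Definition subdiv_vertex (V : finType) (r : rel V) : finType :=
  (V + {s : {set V} | edge_of r s})%type.

Definition subdiv_rel (V : finType) (r : rel V) : rel (subdiv_vertex r) :=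
  fun a b => match a, b with
             | inl v, inr s => v \in val s
             | inr s, inl v => v \in val s
             | _, _ => false
             end.

Definition Knn (n : nat) : rel ('I_n + 'I_n)%type :=
  fun a b => match a, b with
             | inl _, inr _ | inr _, inl _ => true
             | _, _ => false
             end.
Arguments Knn n : clear implicits.
Arguments subdiv_rel {V} r.
Arguments subdiv_vertex {V} r.

From mathcomp Require Import all_boot.
Set Implicit Arguments. Unset Strict Implicit. Unset Printing Implicit Defensive.

(* Call the vertices of Y points and the other vertices lines.  In the
   subdivision of K_{n,n}, two points of the same part are at distance 4, two
   points of different parts at distance 2 and two lines share at most one
   point; conditions (i) are read off from this.
   Conversely, c'_2 = 1 says that two lines share at most one point.
   Distance-regularity and D = 4 give every line at least two points and every
   point at least two lines, and 2-homogeneity for i = 2 and i = 3 excludes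
   lines with three points.  Fix a point x0: the points at distance 2 from x0
   and the remaining points form the two parts, because no three points are
   pairwise at distance 2 (c_3 is constant at a point) and no two points at
   distance 4 from x0 are at distance 2 (D = 4).  Finally b_1 at a line takes
   the same value at its two ends, which forces the parts to have equal size. *)

Lemma even_le4_cases d : d <= 4 -> ~~ odd d -> [\/ d = 0, d = 2 | d = 4].
Proof. by case: d => [|[|[|[|[|d]]]]] //= _ _; constructor. Qed.

Lemma Knn_edge_proof n (i j : 'I_n) : edge_of (Knn n) [set inl i; inr j].
Proof. by apply/existsP; exists (inl i); apply/existsP; exists (inr j); rewrite /= eqxx. Qed.

Definition Knn_edge n (i j : 'I_n) : {s | edge_of (Knn n) s} :=
  exist (fun s => edge_of (Knn n) s) _ (Knn_edge_proof i j).

Lemma Knn_edgeP n (s : {s | edge_of (Knn n) s}) : exists i j, s = Knn_edge i j.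
Proof.
case: s => S sE; have /existsP[u /existsP[v /andP[uv /eqP defS]]] := sE.
have [i [j defS']] : exists i j, S = [set inl i; inr j].
  by case: u v uv defS => [i|i] [j|j] //= _ ->; [exists i, j | exists j, i; rewrite setUC].
by exists i, j; apply: val_inj.
Qed.

Lemma mem_Knn_edge_l n (i j k : 'I_n) : (inl k \in val (Knn_edge i j)) = (k == i).
Proof. by rewrite /= !inE; apply/idP/eqP => [/orP[] /eqP // [->]|->]; rewrite ?eqxx. Qed.

Lemma mem_Knn_edge_r n (i j k : 'I_n) : (inr k \in val (Knn_edge i j)) = (k == j).
Proof. by rewrite /= !inE; apply/idP/eqP => [/orP[] /eqP // [->]|->]; rewrite ?eqxx ?orbT. Qed.

Lemma Knn_edge_inj n (i j i' j' : 'I_n) : Knn_edge i j = Knn_edge i' j' -> i = i' /\ j = j'.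
Proof.
move=> eq; split; apply/eqP.
  by rewrite -(mem_Knn_edge_l i' j') -eq mem_Knn_edge_l.
by rewrite -(mem_Knn_edge_r i' j') -eq mem_Knn_edge_r.
Qed.

Lemma Knn_edge_eq n (s : {s | edge_of (Knn n) s}) i j :
  inl i \in val s -> inr j \in val s -> s = Knn_edge i j.
Proof.
by have [i' [j' ->]] := Knn_edgeP s; rewrite mem_Knn_edge_l mem_Knn_edge_r => /eqP-> /eqP->.
Qed.

Lemma subdiv_rel_sym (V : finType) (r : rel V) : symmetric (subdiv_rel r).
Proof. by case=> [?|?] [?|?]. Qed.

Section Graph.
Variables (T : finType) (e : rel T).
Hypotheses (sym_e : symmetric e) (irr_e : irreflexive e).

Lemma walk1 u w : walk e 1 u w = e u w.
Proof.
by apply/existsP/idP => [[v /andP[h /eqP <-]] //|h]; exists w; rewrite h eqxx.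
Qed.

Lemma walk_cons k u v w : e u v -> walk e k v w -> walk e k.+1 u w.
Proof. by move=> euv hvw; apply/existsP; exists v; rewrite euv. Qed.

Lemma walk_cat m n u v w : walk e m u v -> walk e n v w -> walk e (m + n) u w.
Proof.
elim: m u => [|m IH] u /=; first by move=> /eqP->.
by case/existsP=> x /andP[eux hx] hw; apply: walk_cons eux (IH _ hx hw).
Qed.

Lemma walk_sym k u w : walk e k u w -> walk e k w u.
Proof.
elim: k u w => [|k IH] u w /=; first by rewrite eq_sym.
case/existsP=> v /andP[euv hv].
have := walk_cat (IH _ _ hv) (_ : walk e 1 v u); rewrite addn1; apply.
by rewrite walk1 sym_e.
Qed.

Lemma walk_pathP k u w :
  walk e k u w <-> exists p, [/\ size p = k, path e u p & last u p = w].
Proof.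
elim: k u => [|k IH] u /=.
  split=> [/eqP->|]; first by exists [::].
  by case=> -[|x p] [] //= _ _ ->.
split=> [/existsP[v /andP[euv /IH[p [<- pp <-]]]]|[[|v p] [] //= [sp] /andP[euv pp] lp]].
  by exists (v :: p); rewrite /= euv.
by apply: walk_cons euv _; apply/IH; exists p.
Qed.

(* Removing loops gives a walk shorter than #|T|, the search range of [dist]. *)
Lemma walk_short k u w : walk e k u w -> exists2 j, j < #|T| & walk e j u w.
Proof.
case/walk_pathP=> p [_ pp <-]; case: (shortenP pp) => p' pp' up' _.
exists (size p'); last by apply/walk_pathP; exists p'.
by have := max_card (mem (u :: p')); rewrite (card_uniqP up').
Qed.

Lemma dist_le k u w : walk e k u w -> dist e u w <= k.
Proof.
move=> h; rewrite leqNgt; apply/negP => lt_k.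
have kT : k < #|T| by rewrite (leq_trans lt_k) // /dist -[X in _ <= X](size_iota 0) find_size.
by have := before_find 0 lt_k; rewrite nth_iota // h.
Qed.

Hypothesis conn : connected_graph e.

Lemma dist_walk u w : walk e (dist e u w) u w.
Proof.
have [k /walk_short[j jT hj]] := conn u w.
have hs : has (fun k => walk e k u w) (iota 0 #|T|).
  by apply/hasP; exists j; rewrite // mem_iota.
by have := nth_find 0 hs; rewrite nth_iota // -[X in _ < X](size_iota 0) -has_find.
Qed.

Lemma dist0 u w : (dist e u w == 0) = (u == w).
Proof.
apply/eqP/eqP => [h|<-]; first by have := dist_walk u w; rewrite h => /eqP.
by apply/eqP; rewrite -leqn0; apply: (@dist_le 0); rewrite /= eqxx.
Qed.

Lemma dist_refl u : dist e u u = 0.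
Proof. by apply/eqP; rewrite dist0. Qed.

Lemma dist1 u w : (dist e u w == 1) = e u w.
Proof.
apply/eqP/idP => [h|h]; first by have := dist_walk u w; rewrite h walk1.
have : dist e u w <= 1 by apply: dist_le; rewrite walk1.
have : dist e u w != 0 by rewrite dist0; apply: contraTneq h => ->; rewrite irr_e.
by case: (dist e u w) => [|[|]].
Qed.

Lemma dist_sym u w : dist e u w = dist e w u.
Proof. by apply/eqP; rewrite eqn_leq !dist_le // walk_sym // dist_walk. Qed.

Lemma dist_tri u v w : dist e u w <= dist e u v + dist e v w.
Proof. by apply/dist_le/walk_cat; apply: dist_walk. Qed.

Lemma dist_step k u w : dist e u w = k.+1 -> exists2 v, e u v & dist e v w = k.
Proof.
move=> h; have := dist_walk u w; rewrite h => /existsP[v /andP[euv hv]].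
exists v => //; apply/eqP; rewrite eqn_leq dist_le //=.
by have := dist_tri u v w; rewrite h (eqP (_ : dist e u v == 1)) ?dist1.
Qed.

Lemma dist_le_ecc u w : dist e u w <= ecc e u.
Proof. exact: (@leq_bigmax T (dist e u) w). Qed.

Lemma ecc_attained u : exists w, dist e u w = ecc e u.
Proof.
have [|w hw] := @eq_bigmax T (dist e u); last by exists w; rewrite /ecc hw.
by apply/card_gt0P; exists u.
Qed.

Lemma dist2P u w : dist e u w = 2 -> exists2 p, e u p & e p w.
Proof.
by move=> /dist_step[p eup /dist_step[q epq /eqP]]; rewrite dist0 => /eqP <-; exists p.
Qed.

Lemma b_num_geodesic u z k : dist e u z = k.+2 -> exists2 w, e u w & 0 < b_num e u w.
Proof.
move=> hz; have [w euw /dist_step[y ewy hyz]] := dist_step hz; exists w => //.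
have uw1 : dist e u w = 1 by apply/eqP; rewrite dist1.
have uy2 : dist e u y = 2.
  apply/eqP; rewrite eqn_leq; apply/andP; split.
    by apply: dist_le; apply: walk_cons euw _; rewrite walk1.
  by have := dist_tri u y z; rewrite hz hyz -addn2 [dist e u y + k]addnC leq_add2l.
by apply/card_gt0P; exists y; rewrite !inE uw1 uy2.
Qed.

Lemma card_common_nbr_sphere0 x y z : e x z -> e y z ->
  #|nbhd e x :&: nbhd e y :&: sphere e z 0| = 1.
Proof.
move=> exz eyz; apply: etrans (cards1 z); apply: eq_card => v.
by rewrite !inE dist0; case: (eqVneq v z) => [->|]; rewrite ?exz ?eyz ?andbF.
Qed.

Lemma nbhd_pairE l a b : nbhd e l = [set a; b] -> forall v, e l v = (v == a) || (v == b).
Proof. by move=> /setP hn v; have := hn v; rewrite !inE. Qed.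

Variable Y : {set T}.
Hypothesis bip : bipartite_on e Y.

Lemma walk_parity k u w : walk e k u w -> ((u \in Y) == (w \in Y)) = ~~ odd k.
Proof.
elim: k u => [|k IH] u /=; first by move=> /eqP->; rewrite eqxx.
case/existsP=> v /andP[/bip euv /IH <-].
by move: euv; case: (u \in Y); case: (v \in Y); case: (w \in Y).
Qed.

Lemma dist_parity u w : ((u \in Y) == (w \in Y)) = ~~ odd (dist e u w).
Proof. exact: walk_parity (dist_walk u w). Qed.

Lemma dist_even_Y u w : u \in Y -> ~~ odd (dist e u w) -> w \in Y.
Proof. by move=> hu; rewrite -dist_parity hu => /eqP <-. Qed.

Lemma edge_Y u v : e u v -> u \in Y -> v \notin Y.
Proof. by move=> /bip; case: (u \in Y); case: (v \in Y). Qed.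

Lemma edge_nY u v : e u v -> u \notin Y -> v \in Y.
Proof. by move=> /bip; case: (u \in Y); case: (v \in Y). Qed.

Lemma dist2_path u p w : u != w -> e u p -> e p w -> dist e u w = 2.
Proof.
move=> uw eup epw; have w2 : walk e 2 u w by apply: walk_cons eup _; rewrite walk1.
have := dist_le w2; have := walk_parity w2; rewrite dist_parity.
by rewrite -dist0 in uw; case: (dist e u w) uw => [|[|[|]]].
Qed.

Lemma dist3_path u v w x : ~~ e u x -> e u v -> e v w -> e w x -> dist e u x = 3.
Proof.
move=> ux euv evw ewx.
have w3 : walk e 3 u x by apply: walk_cons euv (walk_cons evw _); rewrite walk1.
have := dist_le w3; have := walk_parity w3; rewrite dist_parity -dist1 in ux *.
by case: (dist e u x) ux => [|[|[|[|]]]].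
Qed.

Lemma b_num_edge l a : e l a -> b_num e l a = #|nbhd e a| - 1.
Proof.
move=> ela; have la1 : dist e l a = 1 by apply/eqP; rewrite dist1.
rewrite /b_num la1 (cardsD1 l (nbhd e a)) inE sym_e ela add1n subn1 /=.
apply: eq_card => v; rewrite !inE; case: (eqVneq v l) => [->|vl] /=.
  by rewrite dist_refl.
apply/andP/idP => [[] //|eav]; split=> //.
by rewrite (dist2_path _ ela eav) // eq_sym.
Qed.

Record subdivided_biclique (A B : {set T}) : Prop := {
  sb_partition : forall x, (x \in Y) = (x \in A) || (x \in B);
  sb_disjoint : forall x, x \in A -> x \notin B;
  sb_line : forall l, l \notin Y ->
    exists a b, [/\ a \in A, b \in B & nbhd e l = [set a; b]];
  sb_join : forall a b, a \in A -> b \in B -> exists l, e a l && e b l;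
  sb_join_uniq : forall a b l l', a \in A -> b \in B ->
    e a l -> e b l -> e a l' -> e b l' -> l = l';
  sb_A2 : 1 < #|A|;
  sb_B2 : 1 < #|B| }.

Lemma subdivided_biclique_sym A B :
  subdivided_biclique A B -> subdivided_biclique B A.
Proof.
case=> hY hD hL hJ hU hA hB; split=> //.
- by move=> x; rewrite orbC.
- by move=> x xB; apply: contraTN xB => /hD.
- by move=> l /hL[a [b [ha hb hn]]]; exists b, a; rewrite setUC.
- by move=> a b ha hb; have [l] := hJ b a hb ha; exists l; rewrite andbC.
- by move=> a b l l' ha hb h1 h2 h3 h4; apply: (hU b a).
Qed.

Section SubdividedBiclique.
Variables A B : {set T}.
Hypothesis S : subdivided_biclique A B.

Lemma sb_AY a : a \in A -> a \in Y.
Proof. by move=> ha; rewrite (sb_partition S) ha. Qed.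

Lemma sb_BY b : b \in B -> b \in Y.
Proof. by move=> hb; rewrite (sb_partition S) hb orbT. Qed.

Lemma sb_BnA b : b \in B -> b \notin A.
Proof. by move=> hb; apply: contraTN hb => /(sb_disjoint S). Qed.

Lemma sb_line_ends l u v : l \notin Y -> u != v -> e l u -> e l v -> (u \in A) != (v \in A).
Proof.
move=> hl uv; have [a [b [ha hb /nbhd_pairE hn]]] := sb_line S hl.
rewrite !hn => /orP[] /eqP eu /orP[] /eqP ev; subst u v; rewrite ?eqxx // in uv *;
  by rewrite ha (negbTE (sb_BnA hb)).
Qed.

Lemma sb_notA_B x : x \in Y -> x \notin A -> x \in B.
Proof. by rewrite (sb_partition S) => /orP[->|]. Qed.

Lemma sb_line_third l x y p : l \notin Y -> x != y -> e l x -> e l y -> e l p ->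
  (p == x) || (p == y).
Proof.
move=> hl xy elx ely elp; case: (eqVneq p x) => //= px; case: (eqVneq p y) => // py.
have := sb_line_ends hl xy elx ely; have := sb_line_ends hl px elp elx.
have := sb_line_ends hl py elp ely.
by case: (x \in A); case: (y \in A); case: (p \in A).
Qed.

Lemma sb_dist2_parts x y : x \in Y -> dist e x y = 2 -> (x \in A) != (y \in A).
Proof.
move=> hx hxy; have [l exl ely] := dist2P hxy.
by apply: (sb_line_ends (edge_Y exl hx)); rewrite -?dist0 ?hxy // sym_e.
Qed.

Lemma sb_dist_AB a b : a \in A -> b \in B -> dist e a b = 2.
Proof.
move=> ha hb; have [l /andP[eal ebl]] := sb_join S ha hb.
apply: dist2_path eal _; last by rewrite sym_e.
by apply: contraTneq hb => <-; exact: (sb_disjoint S ha).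
Qed.

Lemma sb_dist_le4 a v : a \in A -> dist e a v <= 4.
Proof.
move=> ha; have [b [_ [hb _ _]]] := card_gt1P (sb_B2 S).
case vY: (v \in Y); last first.
  have [a' [b' [_ hb' hn]]] := sb_line S (negbT vY).
  rewrite (leq_trans (dist_tri a b' v)) // sb_dist_AB // dist_sym.
  by rewrite (eqP (_ : dist e v b' == 1)) // dist1 (nbhd_pairE hn) eqxx orbT.
case vA: (v \in A).
  by rewrite (leq_trans (dist_tri a b v)) // sb_dist_AB // dist_sym sb_dist_AB.
by rewrite sb_dist_AB // sb_notA_B ?vY ?vA.
Qed.

Lemma sb_ecc_A a : a \in A -> ecc e a = 4.
Proof.
move=> ha; apply/eqP; rewrite eqn_leq; apply/andP; split.
  by apply/bigmax_leqP => v _; apply: sb_dist_le4.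
have [a' a'A aa'] : exists2 a', a' \in A & a != a'.
  have [x [y [hx hy xy]]] := card_gt1P (sb_A2 S).
  by case: (eqVneq a x) => [->|]; [exists y | exists x].
apply: leq_trans (dist_le_ecc a a').
have hev : ~~ odd (dist e a a') by rewrite -dist_parity !sb_AY.
have [/eqP|h2|-> //] := even_le4_cases (sb_dist_le4 a' ha) hev.
  by rewrite dist0 (negbTE aa').
by have := sb_dist2_parts (sb_AY ha) h2; rewrite ha a'A.
Qed.

Lemma sb_lines_meet_once w z p v : w \notin Y -> w != z ->
  e w p -> e z p -> e w v -> e z v -> p = v.
Proof.
move=> hw wz ewp ezp ewv ezv; apply/eqP; apply: contraNT wz => pv.
have [pY vY] := (edge_nY ewp hw, edge_nY ewv hw).
have := sb_line_ends hw pv ewp ewv.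
rewrite !(sym_e w) !(sym_e z) in ewp ezp ewv ezv *.
case pA: (p \in A); case vA: (v \in A) => // _; apply/eqP.
- exact: (sb_join_uniq S pA (sb_notA_B vY (negbT vA))).
- exact: (sb_join_uniq S vA (sb_notA_B pY (negbT pA))).
Qed.

Lemma sb_c_num w z : w \notin Y -> z \in sphere e w 2 -> c_num e w z = 1.
Proof.
rewrite inE => hw /eqP wz2; rewrite /c_num wz2 /=.
have [p ewp epz] := dist2P wz2.
apply: etrans (cards1 p); apply: eq_card => v; rewrite !inE dist1.
apply/andP/eqP => [[ewv ezv]|->]; last by rewrite ewp sym_e.
apply: (sb_lines_meet_once hw _ ewv ezv ewp); last by rewrite sym_e.
by rewrite -dist0 wz2.
Qed.

Lemma sb_no_dist2_triangle x y z : x \in Y ->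
  dist e x y = 2 -> dist e x z = 2 -> dist e y z = 2 -> False.
Proof.
move=> hx hxy hxz hyz.
have hy : y \in Y by apply: dist_even_Y hx _; rewrite hxy.
have := sb_dist2_parts hy hyz; have := sb_dist2_parts hx hxz.
have := sb_dist2_parts hx hxy.
by case: (x \in A); case: (y \in A); case: (z \in A).
Qed.

Lemma sb_two_hom : two_Y_homogeneous e Y 4.
Proof.
move=> i /andP[i1 i3]; have : i \in [:: 1; 2; 3] by case: i i1 i3 => [|[|[|[|]]]].
rewrite !inE => /or3P[] /eqP ->; [exists 1 | exists 0 | exists 0];
  move=> x y z hx; rewrite !inE => /eqP hxy /eqP hxz /eqP hyz.
- by apply: card_common_nbr_sphere0; rewrite -dist1 ?hxz ?hyz.
- by case: (sb_no_dist2_triangle hx hxy hxz hyz).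
apply/eqP; rewrite cards_eq0; apply/eqP/setP => l; rewrite !inE.
apply/negP => /andP[/andP[exl eyl] /eqP /dist2P[p ezp epl]].
have hl := edge_Y exl hx; have xy : x != y by rewrite -dist0 hxy.
rewrite sym_e in exl; rewrite sym_e in eyl; rewrite sym_e in epl.
case/orP: (sb_line_third hl xy exl eyl epl) => /eqP px; subst p.
- by move: hxz; rewrite (eqP (_ : dist e x z == 1)) // dist1 sym_e.
- by move: hyz; rewrite (eqP (_ : dist e y z == 1)) // dist1 sym_e.
Qed.

Definition line_through a b := odflt a [pick l | e a l && e b l].

Lemma line_throughP a b : a \in A -> b \in B ->
  e a (line_through a b) && e b (line_through a b).
Proof.
move=> ha hb; rewrite /line_through; case: pickP => [l //|none].
by have [l] := sb_join S ha hb; rewrite none.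
Qed.

Lemma sb_card_nbhd_A a : a \in A -> #|nbhd e a| = #|B|.
Proof.
move=> ha; have -> : nbhd e a = line_through a @: B.
  apply/setP => l; rewrite inE; apply/idP/imsetP => [eal|[b hb ->]].
    have [a' [b [_ hb /nbhd_pairE hn]]] := sb_line S (edge_Y eal (sb_AY ha)).
    exists b => //; case/andP: (line_throughP ha hb) => h1 h2.
    by apply: (sb_join_uniq S ha hb eal _ h1 h2); rewrite sym_e hn eqxx orbT.
  by case/andP: (line_throughP ha hb).
apply: card_in_imset => b b' hb hb' eqbb'.
case/andP: (line_throughP ha hb) => eal ebl; case/andP: (line_throughP ha hb').
rewrite -eqbb' => _ eb'l; case: (eqVneq b b') => // bb'.
have := sb_line_ends (edge_Y eal (sb_AY ha)) bb'; rewrite !(sym_e (line_through a b)).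
by move=> /(_ ebl eb'l); rewrite !(negbTE (sb_BnA _)).
Qed.

Lemma sb_line_same_part l u v : l \notin Y -> e l u -> e l v ->
  (u \in A) = (v \in A) -> u = v.
Proof.
move=> hl elu elv uv; case: (eqVneq u v) => // /(sb_line_ends hl).
by rewrite uv eqxx => /(_ elu elv).
Qed.

End SubdividedBiclique.

Lemma subdivided_biclique_props A B : subdivided_biclique A B ->
  [/\ two_Y_homogeneous e Y 4,
      (forall x, x \in Y -> ecc e x = 4) &
      (forall w z, w \notin Y -> z \in sphere e w 2 -> c_num e w z = 1)].
Proof.
move=> S; split; [exact: sb_two_hom S | | exact: sb_c_num S].
move=> x; rewrite (sb_partition S) => /orP[] hx; first exact: (sb_ecc_A S hx).
exact: (sb_ecc_A (subdivided_biclique_sym S) hx).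
Qed.

Section FromSubdivision.
Variables (n : nat) (f : T -> subdiv_vertex (Knn n)).
Hypotheses (n_gt1 : 1 < n) (f_bij : bijective f).
Hypothesis f_edge : forall u v, e u v = subdiv_rel (Knn n) (f u) (f v).
Hypothesis f_Y : forall x, (x \in Y) = (if f x is inl _ then true else false).

Definition left_points := [set v | if f v is inl (inl _) then true else false].
Definition right_points := [set v | if f v is inl (inr _) then true else false].

Lemma f_line l : l \notin Y -> exists i j, f l = inr (Knn_edge i j).
Proof.
rewrite f_Y; case: (f l) => // s _.
by have [i [j ->]] := Knn_edgeP s; exists i, j.
Qed.

Lemma subdivision_biclique : subdivided_biclique left_points right_points.
Proof.
have [g fK gK] := f_bij; have fgE := can2_eq fK gK.
have gL i : g (inl (inl i)) \in left_points by rewrite inE gK.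
have gR j : g (inl (inr j)) \in right_points by rewrite inE gK.
have fL a : a \in left_points -> exists i, f a = inl (inl i).
  by rewrite inE; case: (f a) => [[i|]|] //; exists i.
have fR b : b \in right_points -> exists j, f b = inl (inr j).
  by rewrite inE; case: (f b) => [[|j]|] //; exists j.
split.
- by move=> x; rewrite f_Y !inE; case: (f x) => [[]|].
- by move=> x; rewrite !inE; case: (f x) => [[]|].
- move=> l /f_line[i [j fl]]; exists (g (inl (inl i))), (g (inl (inr j))); split=> //.
  apply/setP => v; rewrite !inE -!fgE f_edge fl.
  by case: (f v) => [p|] //=; rewrite !inE.
- move=> a b /fL[i fa] /fR[j fb]; exists (g (inr (Knn_edge i j))).
  by rewrite !f_edge fa fb gK /= !inE !eqxx orbT.
- move=> a b l l' /fL[i fa] /fR[j fb].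
  have fl m : e a m -> e b m -> f m = inr (Knn_edge i j).
    rewrite !f_edge fa fb; case: (f m) => [//|s] /= ia jb.
    by rewrite (Knn_edge_eq ia jb).
  by move=> eal ebl eal' ebl'; apply: (bij_inj f_bij); rewrite !fl.
- apply/card_gt1P; exists (g (inl (inl (Ordinal (ltnW n_gt1))))).
  exists (g (inl (inl (Ordinal n_gt1)))); split=> //.
  by apply/eqP => /(can_inj gK) [].
- apply/card_gt1P; exists (g (inl (inr (Ordinal (ltnW n_gt1))))).
  exists (g (inl (inr (Ordinal n_gt1)))); split=> //.
  by apply/eqP => /(can_inj gK) [].
Qed.

End FromSubdivision.

Definition line_end (P : {set T}) l := odflt l [pick v in P | e l v].

Lemma line_endP (P : {set T}) l v : v \in P -> e l v -> line_end P l \in P /\ e l (line_end P l).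
Proof.
move=> vP elv; rewrite /line_end; case: pickP => [w /andP[] //|none].
by have := none v; rewrite vP elv.
Qed.

Section ToSubdivision.
Variables A B : {set T}.
Hypothesis S : subdivided_biclique A B.
Hypothesis card_AB : #|A| = #|B|.
Variables a0 b0 : T.
Hypotheses (a0A : a0 \in A) (b0B : b0 \in B).

Definition idxA v : 'I_#|A| := enum_rank_in a0A v.
Definition idxB v : 'I_#|A| := cast_ord (esym card_AB) (enum_rank_in b0B v).

Definition biclique_code v : subdiv_vertex (Knn #|A|) :=
  if v \in A then inl (inl (idxA v))
  else if v \in B then inl (inr (idxB v))
  else inr (Knn_edge (idxA (line_end A v)) (idxB (line_end B v))).

Lemma idxA_inj : {in A &, injective idxA}.
Proof. exact: enum_rank_in_inj. Qed.

Lemma idxB_inj : {in B &, injective idxB}.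
Proof. by move=> u v uB vB /cast_ord_inj; apply: enum_rank_in_inj. Qed.

Lemma line_endA l a : a \in A -> e l a -> line_end A l = a.
Proof.
move=> aA ela; have [aA' ela'] := line_endP aA ela.
have hl : l \notin Y by apply: (edge_Y _ (sb_AY S aA)); rewrite sym_e.
by apply: (sb_line_same_part S hl ela' ela); rewrite aA aA'.
Qed.

Lemma line_endB l b : b \in B -> e l b -> line_end B l = b.
Proof.
move=> bB elb; have [bB' elb'] := line_endP bB elb.
have hl : l \notin Y by apply: (edge_Y _ (sb_BY S bB)); rewrite sym_e.
by apply: (sb_line_same_part S hl elb' elb); rewrite !(negbTE (sb_BnA S _)).
Qed.

Lemma line_endsE l : l \notin Y ->
  [/\ line_end A l \in A, line_end B l \in B & nbhd e l = [set line_end A l; line_end B l]].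
Proof.
move=> hl; have [a [b [ha hb hn]]] := sb_line S hl.
have [ela elb] : e l a /\ e l b by rewrite !(nbhd_pairE hn) !eqxx orbT.
by rewrite (line_endA ha ela) (line_endB hb elb).
Qed.

Lemma codeA v : v \in A -> biclique_code v = inl (inl (idxA v)).
Proof. by rewrite /biclique_code => ->. Qed.

Lemma codeB v : v \in B -> biclique_code v = inl (inr (idxB v)).
Proof. by move=> vB; rewrite /biclique_code (negbTE (sb_BnA S vB)) vB. Qed.

Lemma code_line v : v \notin Y ->
  biclique_code v = inr (Knn_edge (idxA (line_end A v)) (idxB (line_end B v))).
Proof. by rewrite (sb_partition S) negb_or /biclique_code => /andP[/negbTE-> /negbTE->]. Qed.

Lemma part_cases v : [\/ v \in A, v \in B | v \notin Y].
Proof.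
case vY: (v \in Y); last by constructor 3.
by move: vY; rewrite (sb_partition S) => /orP[]; [constructor 1 | constructor 2].
Qed.

Lemma code_inj : injective biclique_code.
Proof.
move=> u v; case: (part_cases u) => hu;
  [rewrite (codeA hu) | rewrite (codeB hu) | rewrite (code_line hu)];
  (case: (part_cases v) => hv;
  [rewrite (codeA hv) | rewrite (codeB hv) | rewrite (code_line hv)]) => //.
- by case; apply: idxA_inj.
- by case=> /val_inj h; rewrite -(enum_rankK_in b0B hu) h enum_rankK_in.
move=> eq_code; have [] := Knn_edge_inj (inr_inj eq_code).
have [aA bB /nbhd_pairE hnu] := line_endsE hu; have [aA' bB' /nbhd_pairE hnv] := line_endsE hv.
move=> /(idxA_inj aA aA') ea /(idxB_inj bB bB') eb.
apply: (sb_join_uniq S aA bB); rewrite sym_e ?hnu ?hnv -?ea -?eb eqxx ?orbT //.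
Qed.

Lemma code_surj c : exists v, biclique_code v = c.
Proof.
case: c => [[i|j]|s].
- by exists (enum_val i); rewrite codeA ?enum_valP // /idxA enum_valK_in.
- exists (enum_val (cast_ord card_AB j)); rewrite codeB ?enum_valP //.
  by rewrite /idxB enum_valK_in cast_ordK.
have [i [j ->]] := Knn_edgeP s.
set a := enum_val i; set b := enum_val (cast_ord card_AB j).
have [aA bB] : a \in A /\ b \in B by split; apply: enum_valP.
set l := line_through a b; have /andP[eal ebl] := line_throughP S aA bB.
have [ela elb] : e l a /\ e l b by split; rewrite sym_e.
exists l; rewrite code_line; last exact: edge_Y eal (sb_AY S aA).
by rewrite (line_endA aA ela) (line_endB bB elb) /idxA /idxB !enum_valK_in cast_ordK.
Qed.

Lemma code_bij : bijective biclique_code.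
Proof.
apply: (inj_card_bij code_inj); pose g c := odflt a0 [pick v | biclique_code v == c].
suff /can_inj/leq_card : cancel g biclique_code by [].
move=> c; rewrite /g; case: pickP => [v /eqP //|none].
by have [v cv] := code_surj c; have := none v; rewrite cv eqxx.
Qed.

Lemma code_Y v : (v \in Y) = (if biclique_code v is inl _ then true else false).
Proof.
case: (part_cases v) => hv.
- by rewrite codeA // (sb_AY S hv).
- by rewrite codeB // (sb_BY S hv).
- by rewrite code_line // (negbTE hv).
Qed.

Lemma code_edge_line u l : u \in Y -> l \notin Y ->
  e l u = subdiv_rel (Knn #|A|) (biclique_code l) (biclique_code u).
Proof.
move=> uY hl; have [aA bB /nbhd_pairE ->] := line_endsE hl.
rewrite code_line //=; move: uY; rewrite (sb_partition S) => /orP[uA|uB].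
- rewrite codeA // mem_Knn_edge_l (inj_in_eq idxA_inj) //.
  suff -> : (u == line_end B l) = false by rewrite orbF.
  by apply: contraTF uA => /eqP->; exact: (sb_BnA S bB).
- rewrite codeB // mem_Knn_edge_r (inj_in_eq idxB_inj) //.
  suff -> : (u == line_end A l) = false by [].
  by apply: contraTF uB => /eqP->; exact: (sb_disjoint S aA).
Qed.

Lemma code_edge u v : e u v = subdiv_rel (Knn #|A|) (biclique_code u) (biclique_code v).
Proof.
case: (boolP ((u \in Y) == (v \in Y))) => [same|].
  have -> : e u v = false by apply/negbTE/negP => /bip; rewrite same.
  by move: same; rewrite !code_Y; case: (biclique_code u); case: (biclique_code v).
case uY: (u \in Y); case vY: (v \in Y) => // _.
- by rewrite sym_e subdiv_rel_sym code_edge_line ?uY ?vY.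
- by rewrite code_edge_line ?uY ?vY.
Qed.

End ToSubdivision.

Lemma subdivided_biclique_subdivision A B : subdivided_biclique A B -> #|A| = #|B| ->
  exists n, 1 < n /\ exists f : T -> subdiv_vertex (Knn n),
    [/\ bijective f, (forall u v, e u v = subdiv_rel (Knn n) (f u) (f v)) &
        (forall x, (x \in Y) = (if f x is inl _ then true else false))].
Proof.
move=> S card_AB; have [a0 [_ [a0A _ _]]] := card_gt1P (sb_A2 S).
have [b0 [_ [b0B _ _]]] := card_gt1P (sb_B2 S).
exists #|A|; split; first exact: sb_A2 S.
exists (biclique_code card_AB a0A b0B).
by split; [apply: code_bij | apply: code_edge | apply: code_Y].
Qed.

Section Homogeneous.
Hypothesis dr : forall u, dist_regularized_vertex e u.
Hypothesis hom : two_Y_homogeneous e Y 4.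
Hypothesis eccY : forall x, x \in Y -> ecc e x = 4.
Hypothesis c2 : forall w z, w \notin Y -> z \in sphere e w 2 -> c_num e w z = 1.

Lemma b_num_const u w w' : dist e u w = dist e u w' -> b_num e u w = b_num e u w'.
Proof.
move=> ww'; have hw : w \in sphere e u (dist e u w) by rewrite inE.
have hw' : w' \in sphere e u (dist e u w) by rewrite inE ww'.
by have [_ -> _] := dr (dist_le_ecc u w) hw hw'.
Qed.

Lemma c_num_const u w w' : dist e u w = dist e u w' -> c_num e u w = c_num e u w'.
Proof.
move=> ww'; have hw : w \in sphere e u (dist e u w) by rewrite inE.
have hw' : w' \in sphere e u (dist e u w) by rewrite inE ww'.
by have [_ _ ->] := dr (dist_le_ecc u w) hw hw'.
Qed.

Lemma far_point x : x \in Y -> exists z, dist e x z = 4.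
Proof. by move=> hx; have [z hz] := ecc_attained x; exists z; rewrite hz eccY. Qed.

Lemma lines_meet_once w z x y : w \notin Y -> w != z ->
  e w x -> e w y -> e z x -> e z y -> x = y.
Proof.
move=> hw wz ewx ewy ezx ezy; case: (eqVneq x y) => // xy.
have wz2 : dist e w z = 2 by apply: (dist2_path wz ewx); rewrite sym_e.
have := c2 hw (_ : z \in sphere e w 2); rewrite inE wz2 /c_num wz2 => /(_ isT) /= c1.
have : #|[set x; y]| <= #|sphere e w 1 :&: nbhd e z|.
  by apply/subset_leq_card/subsetP => v; rewrite !inE dist1 => /pred2P[]->; apply/andP.
by rewrite c1 cards2 xy.
Qed.

Lemma nbr_has_dist2_nbr u w z : 1 < dist e u z -> e u w -> exists2 y, e w y & dist e u y = 2.
Proof.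
case uz: (dist e u z) => [|[|k]] // _ euw.
have [w' euw' pos] := b_num_geodesic uz.
have uw1 v : e u v -> dist e u v = 1 by move=> euv; apply/eqP; rewrite dist1.
move: pos; rewrite (@b_num_const u w' w) ?uw1 //.
by case/card_gt0P=> y; rewrite !inE (uw1 w euw) => /andP[/eqP uy2 ewy]; exists y.
Qed.

Lemma point_two_lines x L : x \in Y -> e x L -> exists2 M, M != L & e x M.
Proof.
move=> hx exL; have [z xz] := far_point hx.
have xL1 : dist e x L = 1 by apply/eqP; rewrite dist1.
have Lz : 1 < dist e L z.
  by have := dist_tri x L z; rewrite xz xL1 add1n ltnS => h; apply: leq_trans h.
have eLx : e L x by rewrite sym_e.
have [M exM LM] := nbr_has_dist2_nbr Lz eLx.
by exists M; rewrite // eq_sym -dist0 LM.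
Qed.

Lemma hom_transfer i x y z x' y' z' : 1 <= i <= 3 -> x \in Y -> x' \in Y ->
    dist e x y = 2 -> dist e x z = i -> dist e y z = i ->
    dist e x' y' = 2 -> dist e x' z' = i -> dist e y' z' = i ->
  (exists W, [&& e x W, e y W & dist e z W == i.-1]) ->
  exists W, [&& e x' W, e y' W & dist e z' W == i.-1].
Proof.
move=> hi hx hx' xy xz yz xy' xz' yz' [W hW]; have [k hk] := hom hi.
have : 0 < #|nbhd e x' :&: nbhd e y' :&: sphere e z' i.-1|.
  rewrite (hk x' y' z') ?inE ?xy' ?xz' ?yz' // -(hk x y z) ?inE ?xy ?xz ?yz //.
  by apply/card_gt0P; exists W; rewrite !inE -andbA.
by case/card_gt0P=> W'; rewrite !inE -andbA; exists W'.
Qed.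

Variable x0 : T.
Hypothesis x0Y : x0 \in Y.

Lemma line_two_points l : l \notin Y -> exists x y, [/\ x != y, e l x & e l y].
Proof.
move=> hl; have [v elv] : exists v, e l v.
  have : dist e l x0 != 0 by rewrite dist0; apply: contraNneq hl => ->.
  by case lx0: (dist e l x0) => [|k] // _; have [v elv _] := dist_step lx0; exists v.
have vY := edge_nY elv hl; have [z vz] := far_point vY.
have evl : e v l by rewrite sym_e.
have vz1 : 1 < dist e v z by rewrite vz.
have [y ely vy] := nbr_has_dist2_nbr vz1 evl.
by exists v, y; rewrite -dist0 vy.
Qed.

Section ThreePointLine.
Variables L x y p : T.
Hypotheses (hL : L \notin Y) (xy : x != y) (xp : x != p) (yp : y != p).
Hypotheses (eLx : e L x) (eLy : e L y) (eLp : e L p).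

Let hx : x \in Y := edge_nY eLx hL.
Let exL : e x L. Proof. by rewrite sym_e. Qed.
Let eyL : e y L. Proof. by rewrite sym_e. Qed.
Let epL : e p L. Proof. by rewrite sym_e. Qed.

(* Homogeneity for i = 2 moves the common line L of x, y, p to any triple of
   points pairwise at distance 2. *)
Lemma three_point_line_triangle x' r q : x' \in Y ->
    dist e x' r = 2 -> dist e x' q = 2 -> dist e r q = 2 ->
  exists W, [&& e x' W, e r W & dist e q W == 1].
Proof.
move=> hx' h1 h2 h3; apply: (@hom_transfer 2 x y p x' r q isT hx hx' _ _ _ h1 h2 h3).
4: by exists L; rewrite exL eyL /= dist1 epL.
- exact: dist2_path xy exL eLy.
- exact: dist2_path xp exL eLp.
- exact: dist2_path yp eyL eLp.
Qed.

(* Homogeneity for i = 3, with the triple x, y, z where z is a second line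
   through p: the common neighbour L of x and y is at distance 2 from z. *)
Lemma three_point_line_dist3 x' y' N : x' \in Y ->
    dist e x' y' = 2 -> dist e x' N = 3 -> dist e y' N = 3 ->
  exists W, [&& e x' W, e y' W & dist e N W == 2].
Proof.
have [z zL epz] := point_two_lines (edge_nY eLp hL) epL.
have far_z v : v != p -> e L v -> dist e v z = 3.
  move=> vp eLv; apply: (dist3_path _ (_ : e v L) eLp epz); last by rewrite sym_e.
  apply: contra vp => evz; rewrite eq_sym in zL.
  have [ezv ezp] : e z v /\ e z p by split; rewrite sym_e.
  by rewrite (lines_meet_once hL zL eLv eLp ezv ezp).
move=> hx' h1 h2 h3; apply: (@hom_transfer 3 x y z x' y' N isT hx hx' _ _ _ h1 h2 h3).
- exact: dist2_path xy exL eLy.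
- exact: far_z.
- exact: far_z.
exists L; rewrite exL eyL /=; apply/eqP/(dist2_path zL); last exact: epL.
by rewrite sym_e.
Qed.

Lemma three_point_line_meet q N r : q \in Y -> dist e x q = 2 -> ~~ e q L ->
  e q N -> ~~ e x N -> e N r -> e L r -> False.
Proof.
move=> hq xq2 qL eqN xN eNr eLr.
have xr : x != r by apply: contraNneq xN => ->; rewrite sym_e.
have rq : r != q by apply: contraNneq qL => <-; rewrite sym_e.
have xr2 : dist e x r = 2 := dist2_path xr exL eLr.
have rq2 : dist e r q = 2 by apply: (dist2_path rq (_ : e r N)); rewrite sym_e.
have [W /and3P[exW erW /eqP qW]] := three_point_line_triangle hx xr2 xq2 rq2.
have eqW : e q W by rewrite -dist1 qW.
have LW : L != W by apply: contraNneq qL => ->.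
by move: xr; rewrite (lines_meet_once hL LW eLx eLr) ?eqxx // sym_e.
Qed.

Lemma three_point_line_apart N : N \notin Y -> dist e x N = 3 ->
  (forall r, e N r -> ~~ e L r) -> False.
Proof.
move=> hN xN3 apart.
have yN : ~~ e y N.
  by apply/negP => eyN; have := apart y; rewrite sym_e eyN eLy => /(_ isT).
have yN3 : dist e y N = 3.
  have hy := edge_nY eLy hL.
  have : odd (dist e y N) by rewrite -[odd _]negbK -dist_parity hy (negbTE hN).
  have : dist e y N <= 4 by rewrite -(eccY hy) dist_le_ecc.
  by rewrite -dist1 in yN; case: (dist e y N) yN => [|[|[|[|[|]]]]].
have xy2 : dist e x y = 2 := dist2_path xy exL eLy.
have [W /and3P[exW eyW /eqP /dist2P[r eNr erW]]] := three_point_line_dist3 hx xy2 xN3 yN3.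
have LW : L != W by apply/eqP => LW; move: (apart r eNr); rewrite LW sym_e erW.
by move: xy; rewrite (lines_meet_once hL LW eLx eLy) ?eqxx // sym_e.
Qed.

Lemma three_point_line : False.
Proof.
have [M ML exM] := point_two_lines hx exL; have hM := edge_Y exM hx.
have [q eMq qx] : exists2 q, e M q & q != x.
  have [u [v [uv eMu eMv]]] := line_two_points hM.
  by case: (eqVneq u x) => [ux|]; [exists v; rewrite // -ux eq_sym | exists u].
have hq := edge_nY eMq hM; have eqM : e q M by rewrite sym_e.
have [N NM eqN] := point_two_lines hq eqM; have hN := edge_Y eqN hq.
have eMx : e M x by rewrite sym_e.
have xN : ~~ e x N.
  apply: contra qx => exN; rewrite eq_sym; apply/eqP.
  have MN : M != N by rewrite eq_sym.
  by apply: (lines_meet_once hM MN eMx eMq); rewrite sym_e.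
have qL : ~~ e q L.
  apply: contra qx => eqL; rewrite eq_sym; apply/eqP.
  have LM : L != M by rewrite eq_sym.
  by apply: (lines_meet_once hL LM eLx _ eMx eMq); rewrite sym_e.
have xq2 : dist e x q = 2 by apply: dist2_path exM eMq; rewrite eq_sym.
case: (pickP (fun r => e N r && e L r)) => [r /andP[eNr eLr]|apart].
  exact: (three_point_line_meet hq xq2 qL eqN xN eNr eLr).
apply: (three_point_line_apart hN (dist3_path xN exM eMq eqN)) => r eNr.
by have := apart r; rewrite /= eNr /= => ->.
Qed.

End ThreePointLine.

Lemma line_third l a b v : l \notin Y -> a != b -> e l a -> e l b -> e l v ->
  (v == a) || (v == b).
Proof.
move=> hl ab ela elb elv; case: (eqVneq v a) => //= va; case: (eqVneq v b) => // vb.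
by case: (three_point_line hl ab (_ : a != v) (_ : b != v) ela elb elv); rewrite eq_sym.
Qed.

Lemma line_nbhd_pair l : l \notin Y -> exists a b, a != b /\ nbhd e l = [set a; b].
Proof.
move=> hl; have [a [b [ab ela elb]]] := line_two_points hl.
exists a, b; split=> //; apply/setP => v; rewrite !inE.
by apply/idP/idP => [/(line_third hl ab ela elb) //|/pred2P[]->].
Qed.

(* c_3 is constant at x; at a line l' next to a point z at distance 4 from x,
   only the other end of l' is at distance 2. *)
Lemma c_num_line_le1 x l : x \in Y -> dist e x l = 3 -> c_num e x l <= 1.
Proof.
move=> hx xl3; have [z xz] := far_point hx.
have [l' zl' l'x] := dist_step (etrans (dist_sym z x) xz).
have xl'3 : dist e x l' = 3 by rewrite dist_sym.
rewrite (@c_num_const x l l') ?xl3 // /c_num xl'3 /=.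
have zY : z \in Y by apply: dist_even_Y hx _; rewrite xz.
have [a [b [ab hn]]] := line_nbhd_pair (edge_Y zl' zY).
apply: (@leq_trans #|nbhd e l' :\ z|).
  apply/subset_leq_card/subsetP => v; rewrite !inE => /andP[/eqP xv2 ->].
  by rewrite andbT; apply/eqP => vz; move: xv2; rewrite vz xz.
have := cardsD1 z (nbhd e l'); rewrite inE sym_e zl' hn cards2 ab.
by move=> /eqP; rewrite add1n eqSS => /eqP <-.
Qed.

Lemma no_dist2_triangle x y z : x \in Y ->
  dist e x y = 2 -> dist e x z = 2 -> dist e y z = 2 -> False.
Proof.
move=> hx xy2 xz2 yz2; have hy : y \in Y by apply: dist_even_Y hx _; rewrite xy2.
have [xy xz yz] : [/\ x != y, x != z & y != z] by rewrite -!dist0 xy2 xz2 yz2.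
have [p exp epy] := dist2P xy2; have [l eyl elz] := dist2P yz2.
have hl := edge_Y eyl hy; have ely : e l y by rewrite sym_e.
have xl : ~~ e x l.
  apply/negP => exl; have elx : e l x by rewrite sym_e.
  by have := line_third hl yz ely elz elx; rewrite (negbTE xy) (negbTE xz).
have := c_num_line_le1 hx (dist3_path xl exp epy eyl); rewrite leqNgt => /negP; apply.
rewrite /c_num (dist3_path xl exp epy eyl) /=.
apply: (@leq_trans #|[set y; z]|); first by rewrite cards2 yz.
by apply/subset_leq_card/subsetP => v; rewrite !inE => /pred2P[]->; rewrite ?xy2 ?xz2 ?ely.
Qed.

Lemma far_pair_not_dist2 x a b : x \in Y ->
  dist e x a = 4 -> dist e x b = 4 -> dist e a b = 2 -> False.
Proof.
move=> hx xa xb ab2; have [l eal elb] := dist2P ab2.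
have hl : l \notin Y by apply: (edge_Y eal); apply: dist_even_Y hx _; rewrite xa.
have ab : a != b by rewrite -dist0 ab2.
have ela : e l a by rewrite sym_e.
have : dist e l x != 0 by rewrite dist0; apply: contraNneq hl => ->.
case lx: (dist e l x) => [|k] // _; have [v elv vx] := dist_step lx.
have := dist_le_ecc x l; rewrite eccY // dist_sym lx.
by case/orP: (line_third hl ab ela elb elv) => /eqP va; move: vx; rewrite va dist_sym ?xa ?xb => <-.
Qed.

Definition near_x0 := [set v in Y | dist e x0 v == 2].
Definition far_x0 := [set v in Y | dist e x0 v != 2].

Lemma far_x0P a : a \in far_x0 -> a = x0 \/ dist e x0 a = 4.
Proof.
rewrite inE => /andP[ha a2].
have hev : ~~ odd (dist e x0 a) by rewrite -dist_parity x0Y ha.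
have : dist e x0 a <= 4 by rewrite -(eccY x0Y) dist_le_ecc.
move/even_le4_cases/(_ hev) => [/eqP|x0a|]; last by right.
  by rewrite dist0 => /eqP; left.
by rewrite x0a in a2.
Qed.

Lemma far_far_not_dist2 a a' : a \in far_x0 -> a' \in far_x0 -> dist e a a' = 2 -> False.
Proof.
move=> ha ha' aa'.
case: (far_x0P ha) => [x0a|x0a]; first by move: ha'; rewrite inE -x0a aa' andbF.
case: (far_x0P ha') => [x0a'|x0a']; first by move: ha; rewrite inE -x0a' dist_sym aa' andbF.
exact: (far_pair_not_dist2 x0Y x0a x0a' aa').
Qed.

Lemma near_near_not_dist2 b b' : b \in near_x0 -> b' \in near_x0 -> dist e b b' = 2 -> False.
Proof.
rewrite !inE => /andP[_ /eqP x0b] /andP[_ /eqP x0b'] bb'.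
exact: (no_dist2_triangle x0Y x0b x0b' bb').
Qed.

Lemma far_near_dist2 a b : a \in far_x0 -> b \in near_x0 -> dist e a b = 2.
Proof.
move=> ha hb; have [aY bY] : a \in Y /\ b \in Y.
  by move: ha hb; rewrite !inE => /andP[-> _] /andP[-> _].
case: (far_x0P ha) => [->|x0a]; first by move: hb; rewrite inE => /andP[_ /eqP].
have : dist e a b <= 4 by rewrite -(eccY aY) dist_le_ecc.
have hev : ~~ odd (dist e a b) by rewrite -dist_parity aY bY.
move/even_le4_cases/(_ hev) => [/eqP|ab2|ab4] //.
  by rewrite dist0 => /eqP abE; move: ha hb; rewrite abE !inE => /andP[_ /negbTE->] /andP[].
have [v eav /dist_step[c evc cb]] := dist_step ab4.
have ac : a != c by apply: contra_eqN cb => /eqP<-; rewrite ab4.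
have ac2 : dist e a c = 2 := dist2_path ac eav evc.
have cY : c \in Y by apply: dist_even_Y aY _; rewrite ac2.
case cN: (dist e x0 c == 2).
  by case: (near_near_not_dist2 (_ : c \in near_x0) hb cb); rewrite inE cY cN.
by case: (far_far_not_dist2 ha (_ : c \in far_x0) ac2); rewrite inE cY cN.
Qed.

Lemma card_far_x0_gt1 : 1 < #|far_x0|.
Proof.
have [z x0z] := far_point x0Y; apply/card_gt1P; exists x0, z.
rewrite !inE x0Y dist_refl x0z (dist_even_Y x0Y) ?x0z //.
by split=> //; rewrite -dist0 x0z.
Qed.

Lemma card_near_x0_gt1 : 1 < #|near_x0|.
Proof.
have [z x0z] := far_point x0Y; have [v ex0v /dist_step[c evc cz]] := dist_step x0z.
have x0c : x0 != c by apply: contra_eqN cz => /eqP <-; rewrite x0z.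
have x0c2 : dist e x0 c = 2 := dist2_path x0c ex0v evc.
have cY : c \in Y by apply: dist_even_Y x0Y _; rewrite x0c2.
have [c' cc'] := far_point cY.
have c'Y : c' \in Y by apply: dist_even_Y cY _; rewrite cc'.
apply/card_gt1P; exists c, c'; rewrite !inE cY c'Y x0c2 -dist0 cc'; split=> //.
apply/negPn/negP => x0c'; have := @far_near_dist2 c' c; rewrite !inE c'Y cY x0c2 x0c'.
by rewrite dist_sym cc' => /(_ isT isT).
Qed.

Lemma homogeneous_biclique : subdivided_biclique far_x0 near_x0.
Proof.
split; [ by move=> x; rewrite !inE; case: (x \in Y); case: (dist e x0 x == 2)
       | by move=> x; rewrite !inE => /andP[_ /negbTE->]; rewrite andbF
       | | | | exact: card_far_x0_gt1 | exact: card_near_x0_gt1 ].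
- move=> l hl; have [a [b [ab hn]]] := line_nbhd_pair hl.
  have [ela elb] : e l a /\ e l b by rewrite !(nbhd_pairE hn) !eqxx orbT.
  have [aY bY] := (edge_nY ela hl, edge_nY elb hl).
  have ab2 : dist e a b = 2 by apply: (dist2_path ab (_ : e a l) elb); rewrite sym_e.
  case aN: (dist e x0 a == 2).
    exists b, a; rewrite setUC; split=> //; last by rewrite inE aY aN.
    rewrite inE bY; apply/negP => bN.
    by apply: (near_near_not_dist2 (_ : a \in near_x0) _ ab2); rewrite inE ?aY ?bY.
  exists a, b; split=> //; first by rewrite inE aY aN.
  rewrite inE bY; apply/negPn/negP => bN.
  by apply: (far_far_not_dist2 (_ : a \in far_x0) _ ab2); rewrite inE ?aY ?aN ?bY ?bN.
- move=> a b ha hb; have [l eal elb] := dist2P (far_near_dist2 ha hb).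
  by exists l; rewrite eal sym_e.
- move=> a b l l' ha hb eal ebl eal' ebl'; case: (eqVneq l l') => // ll'.
  have hl : l \notin Y by apply: (edge_Y eal); move: ha; rewrite inE => /andP[].
  have ab : a != b by rewrite -dist0 far_near_dist2.
  have [ela elb ela' elb'] : [/\ e l a, e l b, e l' a & e l' b] by split; rewrite sym_e.
  by move: ab; rewrite (lines_meet_once hl ll' ela elb ela' elb') eqxx.
Qed.

(* b_1(l, v) = deg v - 1 agrees at both ends of a line l, and the degree of a
   point is the size of the other part. *)
Lemma card_far_near : #|far_x0| = #|near_x0|.
Proof.
have S := homogeneous_biclique.
have [a [_ [ha _ _]]] := card_gt1P card_far_x0_gt1.
have [b [_ [hb _ _]]] := card_gt1P card_near_x0_gt1.
have /andP[eal ebl] := line_throughP S ha hb; set l := line_through a b in eal ebl.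
have [ela elb] : e l a /\ e l b by split; rewrite sym_e.
have la1 : dist e l a = 1 by apply/eqP; rewrite dist1.
have lb1 : dist e l b = 1 by apply/eqP; rewrite dist1.
have := b_num_const (etrans la1 (esym lb1)); rewrite !b_num_edge //.
rewrite (sb_card_nbhd_A S ha) (sb_card_nbhd_A (subdivided_biclique_sym S) hb).
have := card_far_x0_gt1; have := card_near_x0_gt1.
by case: #|far_x0| => [|[|m]] //; case: #|near_x0| => [|[|k]] // _ _; rewrite !subn1 => -[->].
Qed.

End Homogeneous.

End Graph.

Unset Implicit Arguments.
Set Strict Implicit.

Theorem theorem5p5 (T : finType) (e : rel T) (Y : {set T}) :
  simple_graph e -> dist_regularized e -> bipartite_on e Y -> Y != set0 ->
  ( [/\ two_Y_homogeneous e Y 4,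
        (forall x, x \in Y -> ecc e x = 4) &
        (forall w z, w \notin Y -> z \in sphere e w 2 -> c_num e w z = 1)]
    <->
    exists n : nat, 2 <= n /\
      exists f : T -> subdiv_vertex (Knn n),
        [/\ bijective f,
            (forall u v, e u v = subdiv_rel (Knn n) (f u) (f v)) &
            (forall x, (x \in Y) = (if f x is inl _ then true else false))] ).
Proof.
move=> [sym_e irr_e] [conn dr] bip /set0Pn[x0 x0Y]; split.
  case=> hom eccY c2.
  apply: (subdivided_biclique_subdivision sym_e bip).
    exact: (homogeneous_biclique sym_e irr_e conn bip dr hom eccY c2 x0Y).
  exact: (card_far_near sym_e irr_e conn bip dr hom eccY c2 x0Y).
case=> n [n_gt1 [f [f_bij f_edge f_Y]]].
apply: (subdivided_biclique_props sym_e irr_e conn bip).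
exact: (subdivision_biclique n_gt1 f_bij f_edge f_Y).
Qed.
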